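(* For the problem $1\mid t_j=1\mid\sum C_j$ with obligatory tests (all test times equal to $1$), no deterministic online algorithm has competitive ratio strictly smaller than $\sqrt2$: for every deterministic algorithm and every $\rho<\sqrt2$ there is an instance on which $\mathit{ALG}>\rho\cdot\mathit{OPT}$.
   Context: Scheduling with obligatory tests and uniform test times: $n$ jobs on a single machine, each with test time $t_j=1$ and an unknown processing time $p_j\ge0$ that is revealed to the algorithm only when the test of $j$ completes. The test of a job must be executed before its processing part (which can be executed any time afterwards); operations are non-preemptive, one at a time. $C_j$ is the completion time of the processing part of $j$; objective $\sum_j C_j$. $\mathit{OPT}$ is the optimal offline objective value (tests also obligatory), $\mathit{ALG}$ the algorithm's value. An online algorithm knows $n$ and the test times in advance. *)

From HB Require Import structures.
From mathcomp Require Import all_boot all_order all_algebra.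
From mathcomp Require Import fingroup perm.
From mathcomp Require Import reals.
Set Implicit Arguments. Unset Strict Implicit. Unset Printing Implicit Defensive.
Import Order.TTheory GRing.Theory Num.Theory.
Local Open Scope ring_scope.

(* Operations of an instance with n jobs:
   inl j = the test of job j (duration 1), inr j = the processing part of job j
   (duration p j). *)
Notation opT n := ('I_n + 'I_n)%type.

Section Sched.
Variables (R : realType) (n : nat).

Definition nonneg (p : 'I_n -> R) : Prop := forall j, 0 <= p j.

Definition dur (p : 'I_n -> R) (o : opT n) : R :=
  match o with inl _ => 1 | inr j => p j end.

Definition feasible (s : seq (opT n)) : bool :=
  [&& uniq s, size s == (2 * n)%N &
      [forall j : 'I_n, (index (inl j) s < index (inr j) s)%N]].

(* A schedule is a sequence of (idle time before the operation, operation);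
   operations run one at a time, non-preemptively, in this order. *)
Definition compl (p : 'I_n -> R) (s : seq (R * opT n)) (j : 'I_n) : R :=
  \sum_(x <- take (index (inr j) (unzip2 s)).+1 s) (x.1 + dur p x.2).

Definition sumC (p : 'I_n -> R) (s : seq (R * opT n)) : R :=
  \sum_(j < n) compl p s j.

Definition perm_seq (s : {perm opT n}) : seq (opT n) :=
  [seq s x | x <- enum [set: opT n]].

Definition no_idle (s : seq (opT n)) : seq (R * opT n) := [seq (0, o) | o <- s].

Definition canon_order : seq (opT n) :=
  [seq inl j | j <- enum 'I_n] ++ [seq inr j | j <- enum 'I_n].

(* Optimal offline objective: minimum over all feasible orders
   (idle time never helps offline). *)
Definition OPT (p : 'I_n -> R) : R :=
  \big[Num.min/sumC p (no_idle canon_order)]_(s : {perm opT n} | feasible (perm_seq s))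
     sumC p (no_idle (perm_seq s)).

(* A deterministic online algorithm for n jobs: given the sequence of
   operations started so far and the processing times (of which it may only
   use those of already-tested jobs, see [online_alg]), it returns the idle
   time to insert and the next operation to start. *)
Definition algT := seq (opT n) -> ('I_n -> R) -> R * opT n.

Fixpoint run (A : algT) (p : 'I_n -> R) (k : nat) : seq (R * opT n) :=
  match k with
  | 0 => [::]
  | k'.+1 => let h := run A p k' in rcons h (A (unzip2 h) p)
  end.

Definition ALG (A : algT) (p : 'I_n -> R) : R := sumC p (run A p (2 * n)).

End Sched.

(* Well-formed deterministic online algorithm (a family over all n, since the
   algorithm knows n):  non-clairvoyant (decisions depend only on p_j of jobs
   whose test has been executed), nonnegative idle times, and always producing
   a feasible complete schedule. *)
Definition online_alg (R : realType) (A : forall n, algT R n) : Prop :=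
  [/\ (forall n (h : seq (opT n)) (p p' : 'I_n -> R), nonneg p -> nonneg p' ->
         (forall j, inl j \in h -> p j = p' j) -> A n h p = A n h p'),
      (forall n h (p : 'I_n -> R), nonneg p -> 0 <= (A n h p).1) &
      (forall n (p : 'I_n -> R), nonneg p -> feasible (unzip2 (run (A n) p (2 * n))))].

From HB Require Import structures.
From mathcomp Require Import all_boot all_order all_algebra.
From mathcomp Require Import reals.
From mathcomp Require Import fingroup perm.
From mathcomp Require Import zify ring lra.
Set Implicit Arguments. Unset Strict Implicit. Unset Printing Implicit Defensive.
Import Order.TTheory GRing.Theory Num.Theory.
Local Open Scope ring_scope.

(* Processing times are 0 (short jobs) or 1 (long jobs).  The adversary runs
   the algorithm with all jobs long until it has tested k of them, and then
   makes exactly the tested jobs long: a non-clairvoyant algorithm behaves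
   identically up to that point, so all long jobs are tested before all short
   ones.  Writing sum_j C_j as the sum over ordered pairs (i, j) of the work of
   i done before j completes, every two distinct jobs contribute at least 2 to
   ALG, except two short ones, which contribute at least 1; testing and
   immediately processing the short jobs first and the long ones last costs
   only 1 per pair plus 1 per pair of long jobs.  With n jobs, k of them long,
   2 ALG >= 2 n^2 - (n - k)^2 + n + k and 2 OPT <= n^2 + k^2 + n + k, and for
   n = k + z with z ~ sqrt 2 k the ratio of these bounds tends to sqrt 2. *)

Section Run.
Variables (R : realType) (n : nat) (A : algT R n).

Lemma size_run p m : size (run A p m) = m.
Proof. by elim: m => //= m IH; rewrite size_rcons IH. Qed.

Lemma take_run p m M : (m <= M)%N -> take m (run A p M) = run A p m.
Proof.
elim: M => [|M IH]; first by rewrite leqn0 => /eqP ->.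
rewrite leq_eqVlt => /orP [/eqP ->|].
  by rewrite -[X in take X _](size_run p M.+1) take_size.
by rewrite ltnS /= -cats1 => hm; rewrite takel_cat ?size_run // IH.
Qed.

Lemma eq_run p p' m :
  (forall m', (m' < m)%N -> A (unzip2 (run A p' m')) p = A (unzip2 (run A p' m')) p') ->
  run A p m = run A p' m.
Proof.
elim: m => [//|m IH] eqA /=.
by rewrite IH => [|m' /ltnW]; [rewrite eqA | exact: eqA].
Qed.

Lemma idle_run_ge0 p m :
  (forall h, 0 <= (A h p).1) -> forall x, x \in run A p m -> 0 <= x.1.
Proof.
move=> idle_ge0; elim: m => [//|m IH] x /=.
by rewrite mem_rcons inE => /predU1P [->|/IH].
Qed.

End Run.

Lemma enum_perm_seq (T : finType) (s : seq T) :
  uniq s -> size s = #|T| -> exists pi : {perm T}, [seq pi x | x <- enum T] = s.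
Proof.
move=> s_uniq s_size; set e := enum T.
have e_size : size e = size s by rewrite s_size cardE.
have index_lt x : (index x e < size s)%N by rewrite -e_size index_mem mem_enum.
pose f x := nth x s (index x e).
have f_inj : injective f.
  move=> x y; rewrite /f (set_nth_default y x (index_lt x)) => /eqP.
  rewrite nth_uniq // => /eqP; exact: index_inj (mem_enum _ x) (mem_enum _ y).
exists (perm f_inj); case E: e (e_size) => [|x0 e'] _.
  by apply/esym/size0nil; rewrite -e_size E.
apply: (@eq_from_nth _ x0); rewrite size_map -E // => i lt_i_e.
rewrite (nth_map x0) // permE /f index_uniq ?enum_uniq //.
by rewrite (set_nth_default x0) -?e_size.
Qed.

Section Schedule.
Variables (R : realType) (n : nat).
Implicit Types (s : seq (opT n)) (p : 'I_n -> R).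

Lemma card_opT : #|{: opT n}| = (2 * n)%N.
Proof. by rewrite card_sum card_ord addnn mul2n. Qed.

Lemma feasible_mem s o : feasible s -> o \in s.
Proof.
case/and3P => s_uniq /eqP s_size _.
have [|_ ->] := @uniq_min_size _ s (enum {: opT n}) s_uniq (fun x _ => mem_enum _ x).
  by rewrite s_size -cardE card_opT.
by rewrite mem_enum.
Qed.

Lemma feasible_test_first s j : feasible s -> (index (inl j) s < index (inr j) s)%N.
Proof. by case/and3P => _ _ /forallP. Qed.

Definition work_before s p (i j : 'I_n) : R :=
  (index (inl i) s <= index (inr j) s)%N%:R
  + (index (inr i) s <= index (inr j) s)%N%:R * p i.

Lemma compl_work_before p (sch : seq (R * opT n)) j :
  feasible (unzip2 sch) ->
  compl p sch j = \sum_(x <- take (index (inr j) (unzip2 sch)).+1 sch) x.1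
                  + \sum_i work_before (unzip2 sch) p i j.
Proof.
move=> sch_feas; rewrite /compl big_split /=; congr (_ + _).
set s := unzip2 sch; set m := (index (inr j) s).+1.
have -> : \sum_(x <- take m sch) dur p x.2 = \sum_(o <- take m s) dur p o.
  by rewrite /s -map_take big_map.
have take_uniq : uniq (take m s) by apply: take_uniq; case/and3P: sch_feas.
rewrite big_uniq // big_mkcond big_sumType /= -big_split /=.
apply: eq_bigr => i _; rewrite !in_take ?feasible_mem // /work_before /= !ltnS.
by case: (_ <= _)%N; case: (_ <= _)%N; rewrite ?mul1r ?mul0r ?addr0 ?add0r.
Qed.

Lemma sumC_no_idle p s :
  feasible s -> sumC p (no_idle R s) = \sum_j \sum_i work_before s p i j.
Proof.
have unzip2_no_idle : unzip2 (no_idle R s) = s by rewrite /unzip2 -map_comp map_id.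
move=> s_feas; apply: eq_bigr => j _.
by rewrite compl_work_before unzip2_no_idle // /no_idle -map_take big_map big1 ?add0r.
Qed.

Lemma sum_work_before_le_sumC p (sch : seq (R * opT n)) :
  feasible (unzip2 sch) -> (forall x, x \in sch -> 0 <= x.1) ->
  \sum_j \sum_i work_before (unzip2 sch) p i j <= sumC p sch.
Proof.
move=> sch_feas idle_ge0; apply: ler_sum => j _.
rewrite compl_work_before // lerDr big_seq; apply: sumr_ge0 => x /mem_take.
exact: idle_ge0.
Qed.

Lemma sumC_ge0 p (sch : seq (R * opT n)) :
  nonneg p -> (forall x, x \in sch -> 0 <= x.1) -> 0 <= sumC p sch.
Proof.
move=> p_ge0 idle_ge0; apply: sumr_ge0 => j _; rewrite /compl big_seq.
apply: sumr_ge0 => -[d o] /mem_take /idle_ge0 /= d_ge0.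
by apply: addr_ge0 => //; case: o.
Qed.

Lemma OPT_ge0 p : nonneg p -> 0 <= OPT p.
Proof.
by move=> p_ge0; apply: le_bigmin => [|pi _]; apply: sumC_ge0 => // x /mapP [o _ ->].
Qed.

Lemma OPT_le_sumC p s : feasible s -> OPT p <= sumC p (no_idle R s).
Proof.
move=> s_feas; have /and3P [s_uniq /eqP s_size _] := s_feas.
have [pi pi_s] : exists pi : {perm opT n}, perm_seq pi = s.
  by rewrite /perm_seq enum_setT -enumT; apply: enum_perm_seq; rewrite ?card_opT.
by rewrite -pi_s; apply: bigmin_le_cond; rewrite pi_s.
Qed.

End Schedule.

Section PairSums.
Variables (R : realType) (n : nat).

Definition one_on (X : {set 'I_n}) (i : 'I_n) : R := (i \in X)%:R.

Lemma one_on_ge0 X : nonneg (one_on X).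
Proof. by move=> i; rewrite /one_on; case: (i \in X). Qed.

Lemma sum_one_on X : \sum_i one_on X i = #|X|%:R.
Proof.
rewrite -sumr_const [RHS]big_mkcond; apply: eq_bigr => i _.
by rewrite /one_on; case: (i \in X).
Qed.

Lemma sum_pairs_sym (c : 'I_n -> 'I_n -> R) :
  2 * \sum_j \sum_i c i j = \sum_j \sum_i (c i j + c j i).
Proof.
rewrite mulr_natl mulr2n [X in _ + X]exchange_big -big_split /=.
by apply: eq_bigr => j _; rewrite -big_split.
Qed.

Lemma sum_pairs_quadratic (a b : R) (c w : 'I_n -> R) :
  \sum_j \sum_i (a + b * (c i * c j) + (i == j)%:R * w i)
  = a * n%:R ^+ 2 + b * (\sum_i c i) ^+ 2 + \sum_i w i.
Proof.
have diag j : \sum_i (i == j)%:R * w i = w j.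
  by rewrite (bigD1 j) //= eqxx mul1r big1 ?addr0 // => i /negbTE ->; rewrite mul0r.
have square : \sum_j \sum_i c i * c j = (\sum_i c i) ^+ 2.
  by rewrite expr2 mulr_sumr; apply: eq_bigr => j _; rewrite mulr_suml.
transitivity (\sum_(j < n) (a * n%:R + b * \sum_i c i * c j + w j)).
  apply: eq_bigr => j _.
  by rewrite !big_split /= diag sumr_const card_ord -mulr_sumr mulr_natr.
by rewrite !big_split /= sumr_const card_ord -mulr_sumr square -mulr_natr; ring.
Qed.

End PairSums.

(* [a] and [b] are the positions of the test and of the processing part of a
   job, [x] tells whether it is long; long jobs are tested before short ones. *)
Lemma work_pair_lb (R : realType) (ai bi aj bj : nat) (xi xj : bool) :
  (ai < bi)%N -> (aj < bj)%N -> bi != bj ->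
  (xi && ~~ xj -> ai < aj)%N -> (xj && ~~ xi -> aj < ai)%N ->
  2 - (1 - xi%:R) * (1 - xj%:R)
  <= (ai <= bj)%N%:R + (bi <= bj)%N%:R * xi%:R
     + ((aj <= bi)%N%:R + (bj <= bi)%N%:R * xj%:R) :> R.
Proof.
case: xi; case: xj => /= ? ? ? ? ?; do 4 case: leqP => /= ?;
  rewrite ?mulr1 ?mulr0 ?addr0 ?add0r; first [lra | exfalso; lia].
Qed.

Section AlgLowerBound.
Variables (R : realType) (n : nat).

Lemma sum_work_before_lb (s : seq (opT n)) (X : {set 'I_n}) :
  feasible s ->
  (forall i j, i \in X -> j \notin X -> (index (inl i) s < index (inl j) s)%N) ->
  2 * n%:R ^+ 2 - (n%:R - #|X|%:R) ^+ 2 + n%:R + #|X|%:R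
  <= 2 * \sum_j \sum_i work_before s (one_on R X) i j.
Proof.
move=> s_feas X_first.
have proc_neq i j : i != j -> index (inr i) s != index (inr j) s.
  apply: contraNneq => /(index_inj (inr i)).
  by rewrite !(feasible_mem _ s_feas) => /(_ isT isT) [->].
have -> : 2 * n%:R ^+ 2 - (n%:R - #|X|%:R) ^+ 2 + n%:R + #|X|%:R
    = \sum_j \sum_i (2 + (-1) * ((1 - one_on R X i) * (1 - one_on R X j))
                     + (i == j)%:R * (1 + one_on R X i)).
  by rewrite sum_pairs_quadratic !big_split /= sumrN sum_one_on sumr_const card_ord; ring.
rewrite sum_pairs_sym; apply: ler_sum => j _; apply: ler_sum => i _.
have [->|ij] := eqVneq i j.
  rewrite /work_before /one_on leqnn (ltnW (feasible_test_first _ s_feas)) /=.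
  by case: (j \in X) => /=; lra.
rewrite mulr0n mul0r addr0 mulN1r.
apply: work_pair_lb; rewrite ?feasible_test_first ?proc_neq //.
- by case/andP => ? ?; apply: X_first.
- by case/andP => ? ?; apply: X_first.
Qed.

End AlgLowerBound.

Section OptUpperBound.
Variables (R : realType) (n : nat).
Implicit Types (L : seq 'I_n) (X : {set 'I_n}) (p : 'I_n -> R).

Definition test_then_process L : seq (opT n) :=
  flatten [seq [:: inl j; inr j] | j <- L].

Lemma size_test_then_process L : size (test_then_process L) = (2 * size L)%N.
Proof. by elim: L => //= j L IH; rewrite IH; lia. Qed.

Lemma index_test_then_process L j : j \in L ->
  index (inl j) (test_then_process L) = (2 * index j L)%N /\
  index (inr j) (test_then_process L) = (2 * index j L).+1.
Proof.
elim: L => [//|i L IH]; rewrite inE /=.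
have [->|ji /IH [-> ->]] := eqVneq j i; first by rewrite !eqxx.
rewrite !(inj_eq (@inl_inj _ _)) !(inj_eq (@inr_inj _ _)) eq_sym (negbTE ji).
by split; lia.
Qed.

Lemma test_then_process_feasible L :
  (forall j, j \in L) -> size L = n -> feasible (test_then_process L).
Proof.
move=> L_mem L_size.
have s_size : size (test_then_process L) = (2 * n)%N.
  by rewrite size_test_then_process L_size.
have test_idx j : index (inl j) (test_then_process L) = (2 * index j L)%N.
  by case: (index_test_then_process (L_mem j)).
have proc_idx j : index (inr j) (test_then_process L) = (2 * index j L).+1.
  by case: (index_test_then_process (L_mem j)).
apply/and3P; split.
- apply: (leq_size_uniq (enum_uniq {: opT n})) => [o _|].
    rewrite -index_mem s_size; case: o => j; rewrite ?test_idx ?proc_idx;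
    by have := L_mem j; rewrite -index_mem L_size; lia.
  by rewrite s_size -cardE card_opT.
- by rewrite s_size.
- by apply/forallP => j; rewrite test_idx proc_idx.
Qed.

Lemma work_before_test_then_process L p i j : i \in L -> j \in L ->
  work_before (test_then_process L) p i j = (index i L <= index j L)%N%:R * (1 + p i).
Proof.
rewrite /work_before => /index_test_then_process [-> ->] /index_test_then_process [_ ->].
have -> : (2 * index i L <= (2 * index j L).+1)%N = (index i L <= index j L)%N.
  by lia.
have -> : ((2 * index i L).+1 <= (2 * index j L).+1)%N = (index i L <= index j L)%N.
  by lia.
by rewrite mulrDr mulr1.
Qed.

Lemma pair_order_ub (ri rj : nat) (xi xj : bool) :
  ri != rj -> (xi && ~~ xj -> rj < ri)%N -> (xj && ~~ xi -> ri < rj)%N ->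
  (ri <= rj)%N%:R * (1 + xi%:R) + (rj <= ri)%N%:R * (1 + xj%:R) <= 1 + xi%:R * xj%:R :> R.
Proof.
case: xi; case: xj => /= ? ? ?; do 2 case: leqP => /= ?;
  rewrite ?mul1r ?mul0r ?addr0 ?add0r; first [lra | exfalso; lia].
Qed.

Definition short_first X : seq 'I_n :=
  [seq j <- enum 'I_n | j \notin X] ++ [seq j <- enum 'I_n | j \in X].

Lemma short_first_mem X j : j \in short_first X.
Proof. by rewrite mem_cat mem_filter mem_enum mem_filter mem_enum !andbT orNb. Qed.

Lemma size_short_first X : size (short_first X) = n.
Proof. by rewrite size_cat !size_filter addnC count_predC size_enum_ord. Qed.

Lemma index_short_first X i j : i \notin X -> j \in X ->
  (index i (short_first X) < index j (short_first X))%N.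
Proof.
move=> iX jX; rewrite !index_cat mem_filter iX mem_enum mem_filter jX /=.
by rewrite (leq_trans _ (leq_addr _ _)) // index_mem mem_filter iX mem_enum.
Qed.

Lemma OPT_one_on_ub X :
  2 * OPT (one_on R X) <= n%:R ^+ 2 + #|X|%:R ^+ 2 + n%:R + #|X|%:R.
Proof.
set L := short_first X.
have L_feas := test_then_process_feasible (short_first_mem X) (size_short_first X).
apply: le_trans (ler_wpM2l _ (OPT_le_sumC _ L_feas)) _ => //.
have -> : n%:R ^+ 2 + #|X|%:R ^+ 2 + n%:R + #|X|%:R
    = \sum_j \sum_i (1 + 1 * (one_on R X i * one_on R X j)
                     + (i == j)%:R * (1 + one_on R X i)) :> R.
  by rewrite sum_pairs_quadratic big_split /= sum_one_on sumr_const card_ord; ring.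
rewrite sumC_no_idle // sum_pairs_sym; apply: ler_sum => j _; apply: ler_sum => i _.
rewrite !work_before_test_then_process ?short_first_mem // mul1r.
have [->|ij] := eqVneq i j; first by rewrite leqnn /one_on; case: (j \in X) => /=; lra.
have L_idx : index i L != index j L.
  by apply: contra_neq ij; apply: index_inj; rewrite ?short_first_mem.
rewrite /one_on mulr0n mul0r addr0; apply: pair_order_ub => // /andP [? ?].
  exact: index_short_first.
exact: index_short_first.
Qed.

End OptUpperBound.

Lemma discrete_ivt (c : nat -> nat) k M :
  c 0%N = 0%N -> (k <= c M)%N -> (forall m, c m.+1 <= (c m).+1)%N ->
  exists2 m, (m <= M)%N & c m = k.
Proof.
move=> c0 k_le c_step; elim: M k_le => [|M IH] k_le.
  by exists 0%N => //; move: k_le; rewrite c0; lia.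
have [/IH [m m_le cm]|lt_cM_k] := leqP k (c M); first by exists m => //; lia.
by exists M.+1 => //; have := c_step M; lia.
Qed.

Section Adversary.
Variables (R : realType) (A : forall n, algT R n).
Arguments A : clear implicits.
Hypothesis A_online : online_alg A.
Variable n : nat.

Let all_long : 'I_n -> R := one_on R [set: 'I_n].

Definition tested (p : 'I_n -> R) m : {set 'I_n} :=
  [set j | inl j \in unzip2 (run (A n) p m)].

Lemma card_tested_succ p m : (#|tested p m.+1| <= #|tested p m|.+1)%N.
Proof.
rewrite /tested /= /unzip2 map_rcons.
set o := (A n _ p).2.
have [j o_j] : exists j, o = inl j \/ o = inr j by case: o => j; exists j; [left | right].
apply: (@leq_trans #|j |: tested p m|); last by rewrite cardsU1; case: (_ \in _).
apply/subset_leq_card/subsetP => i; rewrite !inE mem_rcons inE.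
case/predU1P => [i_o|->]; last by rewrite orbT.
by case: o_j i_o => -> // [->]; rewrite eqxx.
Qed.

Lemma card_tested_all p : nonneg p -> #|tested p (2 * n)| = n.
Proof.
case: A_online => _ _ A_feas p_ge0; rewrite -[RHS]card_ord; apply: eq_card => j.
by rewrite inE feasible_mem ?A_feas.
Qed.

Lemma run_tested m :
  run (A n) (one_on R (tested all_long m)) m = run (A n) all_long m.
Proof.
case: A_online => A_nonclairvoyant _ _.
apply: eq_run => m' lt_m'm; apply: A_nonclairvoyant; rewrite ?one_on_ge0 // => j j_tested.
rewrite /all_long /one_on inE in_setT; congr (_%:R).
rewrite -(take_run _ _ (ltnW lt_m'm)) /unzip2 map_take in j_tested.
by rewrite (mem_take j_tested).
Qed.

Lemma ALG_one_on_lb k : (k <= n)%N ->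
  exists X : {set 'I_n}, #|X| = k /\
    2 * n%:R ^+ 2 - (n%:R - k%:R) ^+ 2 + n%:R + k%:R <= 2 * ALG (A n) (one_on R X).
Proof.
move=> k_le_n; case: (A_online) => _ A_idle_ge0 A_feas.
have card_tested0 : #|tested all_long 0| = 0%N by apply: eq_card0 => j; rewrite inE.
have k_le : (k <= #|tested all_long (2 * n)|)%N by rewrite card_tested_all // one_on_ge0.
have [m m_le <-] := discrete_ivt card_tested0 k_le (card_tested_succ all_long).
set X := tested all_long m; exists X; split => //.
set sch := run (A n) (one_on R X) (2 * n).
have sch_feas : feasible (unzip2 sch) by apply/A_feas/one_on_ge0.
have sch_prefix : take m (unzip2 sch) = unzip2 (run (A n) all_long m).
  by rewrite /unzip2 -map_take take_run // run_tested.
have X_first i j : i \in X -> j \notin X ->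
    (index (inl i) (unzip2 sch) < index (inl j) (unzip2 sch))%N.
  rewrite !inE -sch_prefix => i_X j_X.
  apply: leq_trans (index_ltn i_X) _.
  by rewrite leqNgt -in_take ?(feasible_mem _ sch_feas).
apply: le_trans (sum_work_before_lb R sch_feas X_first) _; rewrite ler_pM2l //.
apply: sum_work_before_le_sumC => //; apply: idle_run_ge0 => h.
by apply/A_idle_ge0/one_on_ge0.
Qed.

End Adversary.

Lemma ratio_gap (R : realType) (r : R) : 1 <= r -> r < Num.sqrt 2 ->
  exists N z : nat,
    (r - 1) * ((N + z)%:R ^+ 2 + N%:R ^+ 2 + (N + z)%:R + N%:R) < 2 * N%:R * z%:R.
Proof.
move=> r_ge1; set s := Num.sqrt (2 : R) => r_lt_s; set t := r - 1.
have s_ge0 : 0 <= s by apply: sqrtr_ge0.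
have s_sq : s * s = 2 by rewrite -expr2 sqr_sqrtr.
set d := (s - r) * (2 + s).
have d_gt0 : 0 < d by apply: mulr_gt0; lra.
set N := (Num.truncn ((s / 2 + 1) / d)).+1.
have N_large : s / 2 + 1 < N%:R * d by rewrite -ltr_pdivrMr //; apply: truncnS_gt.
set z := Num.truncn (s * N%:R).
have z_le : z%:R <= s * N%:R by rewrite truncn_le mulr_ge0.
have z_gt : s * N%:R < z%:R + 1 by rewrite natr1; apply: truncnS_gt.
exists N, z; rewrite natrD.
have N_ge1 : 1 <= N%:R :> R by rewrite ler1n.
have z_ge0 : 0 <= z%:R :> R by [].
have Q_le : (N%:R + z%:R) ^+ 2 + N%:R ^+ 2 + (N%:R + z%:R) + N%:R
            <= (2 + s) * (2 * N%:R ^+ 2 + N%:R) :> R.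
  have : (N%:R + z%:R) ^+ 2 <= (N%:R + s * N%:R) ^+ 2 :> R.
    by rewrite ler_sqr ?nnegrE; nra.
  rewrite !expr2; nra.
apply: le_lt_trans (ler_wpM2l _ Q_le) _; first by rewrite /t; lra.
have t_eq : t * (2 + s) = s - d by rewrite /t /d; nra.
have N_gt0 : 0 < N%:R :> R by lra.
have z_lb : N%:R * (s * N%:R) < N%:R * (z%:R + 1) by rewrite ltr_pM2l.
have N_lb : N%:R * (s + 2) < N%:R * (2 * (N%:R * d) + d) by rewrite ltr_pM2l //; lra.
rewrite mulrA t_eq expr2; nra.
Qed.

Theorem theorem3 (R : realType) (A : forall n, algT R n) :
  online_alg A ->
  forall rho : R, rho < Num.sqrt 2 ->
  exists (n : nat) (p : 'I_n -> R), nonneg p /\ rho * OPT p < ALG (A n) p.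
Proof.
move=> A_online rho rho_lt; set r := Num.max rho 1.
have rho_le_r : rho <= r by rewrite le_max lexx.
have r_ge1 : 1 <= r by rewrite le_max lexx orbT.
have r_lt : r < Num.sqrt 2 by rewrite gt_max rho_lt -{1}sqrtr1 ltr_sqrt ?ltr1n.
have [N [z gap]] := ratio_gap r_ge1 r_lt.
have [X [card_X ALG_lb]] := ALG_one_on_lb A_online (leq_addr z N).
exists (N + z)%N, (one_on R X); split; first exact: one_on_ge0.
have OPT_ub := OPT_one_on_ub R X; rewrite card_X in OPT_ub.
have OPT_ge0 := OPT_ge0 (one_on_ge0 R X).
have rho_OPT : rho * OPT (one_on R X) <= r * OPT (one_on R X) by rewrite ler_wpM2r.
have r_OPT : r * (2 * OPT (one_on R X))
             <= r * ((N + z)%:R ^+ 2 + N%:R ^+ 2 + (N + z)%:R + N%:R).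
  by rewrite ler_wpM2l // (le_trans ler01).
rewrite natrD in ALG_lb r_OPT gap; lra.
Qed.
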